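(* Let $\mathcal{K}$ be a field of characteristic zero, let $c\in\mathcal{K}[x_1,\dots,x_n]$ be nonconstant, let $y_1\in\mathcal{K}[x_1,\dots,x_n]$, and let $u_1,\dots,u_n$ be new variables; write $\underline{x}=(x_1,\dots,x_n)$, $\underline{u}=(u_1,\dots,u_n)$. Then the following are equivalent: (i) $c(\underline{x})=\ell(y_1(\underline{x}))$ for some univariate polynomial $\ell$ over $\mathcal{K}$, and $y_1$ is a coordinate of $\mathcal{K}[x_1,\dots,x_n]$; (ii) $y_1(\underline{x})-y_1(\underline{u})$ divides $c(\underline{x})-c(\underline{u})$ in $\mathcal{K}[\underline{u},\underline{x}]$, and $y_1$ is a coordinate of $\mathcal{K}[x_1,\dots,x_n]$.
   Context: A polynomial $y_1\in\mathcal{K}[x_1,\dots,x_n]$ is a coordinate if there exist $y_2,\dots,y_n$ with $\mathcal{K}[x_1,\dots,x_n]=\mathcal{K}[y_1,y_2,\dots,y_n]$. *)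

From HB Require Import structures.
From mathcomp Require Import all_boot all_algebra.
From mathcomp Require Import mpoly.
Set Implicit Arguments. Unset Strict Implicit. Unset Printing Implicit Defensive.
Import GRing.Theory.
Local Open Scope ring_scope.

(* y is a coordinate of K[x_1..x_n]: there is a family ys = (y_1',...,y_n')
   containing y such that K[x_1..x_n] = K[ys], i.e. every variable x_i is a
   polynomial expression in the ys (the inclusion K[ys] <= K[x] is automatic). *)
Definition coordinate (K : fieldType) (n : nat) (y : {mpoly K[n]}) : Prop :=
  exists ys : n.-tuple {mpoly K[n]},
    (exists i : 'I_n, tnth ys i = y) /\
    (forall i : 'I_n, exists p : {mpoly K[n]}, 'X_i = comp_mpoly ys p).

(* p(x) and p(u) inside K[x_1..x_n,u_1..u_n], variables x_i = 'X_(lshift n i),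
   u_i = 'X_(rshift n i). *)
Definition in_x (K : fieldType) (n : nat) (p : {mpoly K[n]}) : {mpoly K[n + n]} :=
  comp_mpoly [tuple 'X_(lshift n i) | i < n] p.
Definition in_u (K : fieldType) (n : nat) (p : {mpoly K[n]}) : {mpoly K[n + n]} :=
  comp_mpoly [tuple 'X_(rshift n i) | i < n] p.

Definition mdvd (R : comRingType) (a b : R) : Prop := exists q : R, b = q * a.

(* (i) => (ii) is the factorisation l(a) - l(b) = (a - b) q(a, b).
   For (ii) => (i), a coordinate y1 can be sent to a variable x_i0 by the
   substitution x |-> ps inverse to y |-> ys; this needs the injectivity of
   y |-> ys, which holds in characteristic zero because its Jacobian matrix is
   invertible.  Substituting u |-> t := (ps evaluated at x_i0 = y1, x_j = 0)
   into y1(x) - y1(u) | c(x) - c(u) kills the left side since y1(t) = y1,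
   hence c = c(t), which is a polynomial in y1. *)

From HB Require Import structures.
From mathcomp Require Import all_boot all_algebra.
From mathcomp Require Import mpoly.
From mathcomp Require Import ring.
Set Implicit Arguments.
Unset Strict Implicit.
Unset Printing Implicit Defensive.
Import GRing.Theory.
Local Open Scope ring_scope.

Section MPolyComp.
Variable R : comRingType.

Lemma mpoly_rmorph_eq n (S : nzRingType) (f g : {rmorphism {mpoly R[n]} -> S}) :
  (forall c, f c%:MP = g c%:MP) -> (forall i, f 'X_i = g 'X_i) -> f =1 g.
Proof.
move=> fgC fgX p; rewrite [p]mpolyE !rmorph_sum; apply: eq_bigr => m _.
rewrite -mul_mpolyC !rmorphM fgC mpolyXE_id !rmorph_prod; congr (_ * _).
by apply: eq_bigr => i _; rewrite !rmorphXn fgX.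
Qed.

Lemma comp_mpolyA n k l (lq : n.-tuple {mpoly R[k]}) (lr : k.-tuple {mpoly R[l]}) p :
  p \mPo lq \mPo lr = p \mPo [tuple tnth lq i \mPo lr | i < n].
Proof.
apply: (@mpoly_rmorph_eq _ _ (comp_mpoly lr \o comp_mpoly lq)) => [c|i] /=.
  by rewrite !comp_mpolyC.
by rewrite !comp_mpolyXU -!tnth_nth tnth_mktuple.
Qed.

Lemma comp_mpoly_horner n k (t : n.-tuple {mpoly R[k]}) (L : {poly R}) y :
  (map_poly (@mpolyC n R) L).[y] \mPo t = (map_poly (@mpolyC k R) L).[y \mPo t].
Proof.
rewrite -(horner_map (comp_mpoly t)) /= -map_poly_comp.
by congr horner; apply: eq_map_poly => c /=; rewrite comp_mpolyC.
Qed.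

Lemma comp_mpoly_one_var n k (i0 : 'I_n) (y : {mpoly R[k]}) p :
  exists L : {poly R},
    p \mPo [tuple if i == i0 then y else 0 | i < n] = (map_poly (@mpolyC k R) L).[y].
Proof.
pose h i : {poly R} := if i == i0 then 'X else 0.
exists (mmap polyC h p).
apply: (@mpoly_rmorph_eq _ _ _ (horner_eval y \o map_poly (@mpolyC k R) \o mmap polyC h))
  => [c|i] /=.
  by rewrite comp_mpolyC mmapC map_polyC /horner_eval hornerC.
rewrite comp_mpolyXU -tnth_nth tnth_mktuple mmapX mmap1U /h /horner_eval.
by case: eqP => _; rewrite ?map_polyX ?hornerX ?rmorph0 ?horner0.
Qed.

End MPolyComp.

Lemma horner_sub_factor (R : comRingType) (A : {poly R}) (a b : R) :
  exists Q, A.[a] - A.[b] = Q * (a - b).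
Proof.
have : root (A - A.[b]%:P) b by rewrite /root hornerD hornerN hornerC subrr.
case/factor_theorem => Q hQ; exists Q.[a].
move: (congr1 (horner^~ a) hQ); rewrite /= hornerM hornerD hornerN hornerC.
by rewrite hornerD hornerN hornerC hornerX.
Qed.

Lemma mpoly_ring_ind (R : nzRingType) n (P : {mpoly R[n]} -> Prop) :
  (forall c, P c%:MP) -> (forall i, P 'X_i) ->
  (forall p q, P p -> P q -> P (p + q)) -> (forall p q, P p -> P q -> P (p * q)) ->
  forall p, P p.
Proof.
move=> PC PX PD PM p.
have P1 : P 1 by rewrite -mpolyC1.
rewrite [p]mpolyE; elim: (msupp p) => [|m s IH]; first by rewrite big_nil -mpolyC0.
rewrite big_cons; apply: (PD) => //; rewrite -mul_mpolyC mpolyXE_id; apply: (PM) => //.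
elim: (index_enum _) => [|i s' IH']; first by rewrite big_nil.
rewrite big_cons; apply: (PM) => //; elim: (m i) => [|e IHe]; first by rewrite expr0.
by rewrite exprS; apply: (PM).
Qed.

Lemma mderivXU (R : nzRingType) n (i j : 'I_n) :
  mderiv j ('X_i : {mpoly R[n]}) = (i == j)%:R.
Proof.
rewrite mderivX mnm1E; case: eqP => [->|_]; last by rewrite scale0r.
have -> : (U_(j) - U_(j))%MM = 0%MM by apply/mnmP => l; rewrite mnmBE subnn mnm0E.
by rewrite mpolyX0 scale1r.
Qed.

Definition mgrad (R : nzRingType) n (p : {mpoly R[n]}) : 'rV_n := \row_i mderiv i p.

Definition jacobian (R : nzRingType) n k (ys : n.-tuple {mpoly R[k]}) : 'M_(n, k) :=
  \matrix_(j, i) mderiv i (tnth ys j).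

Lemma mgrad0 (R : nzRingType) n : mgrad (0 : {mpoly R[n]}) = 0.
Proof. by apply/rowP => i; rewrite !mxE mderiv0. Qed.

Section ChainRule.
Variables (R : comRingType) (n k : nat).

Lemma mderiv_comp_mpoly (ys : n.-tuple {mpoly R[k]}) i p :
  mderiv i (p \mPo ys) = \sum_j (mderiv j p \mPo ys) * mderiv i (tnth ys j).
Proof.
elim/mpoly_ring_ind: p => [c|l|p q IHp IHq|p q IHp IHq].
- rewrite comp_mpolyC mderivC big1 // => j _.
  by rewrite mderivC comp_mpoly0 mul0r.
- rewrite comp_mpolyXU -tnth_nth (bigD1 l) //= big1 ?addr0.
    by rewrite mderivXU eqxx comp_mpoly1 mul1r.
  by move=> j /negbTE; rewrite eq_sym mderivXU => ->; rewrite comp_mpoly0 mul0r.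
- rewrite comp_mpolyD mderivD IHp IHq -big_split /=.
  by apply: eq_bigr => j _; rewrite mderivD comp_mpolyD mulrDl.
- rewrite rmorphM /= mderivM IHp IHq big_distrl big_distrr -big_split /=.
  by apply: eq_bigr => j _; rewrite mderivM comp_mpolyD !rmorphM /=; ring.
Qed.

Lemma mgrad_comp_mpoly (ys : n.-tuple {mpoly R[k]}) p :
  mgrad (p \mPo ys) = map_mx (comp_mpoly ys) (mgrad p) *m jacobian ys.
Proof.
apply/rowP => i; rewrite !mxE mderiv_comp_mpoly.
by apply: eq_bigr => j _; rewrite !mxE.
Qed.

End ChainRule.

Lemma msize_mderiv (R : nzRingType) n (i : 'I_n) (p : {mpoly R[n]}) :
  (msize (mderiv i p) <= (msize p).-1)%N.
Proof.
rewrite [X in (X <= _)%N]msizeE; apply/bigmax_leqP_seq => m.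
rewrite mcoeff_msupp mcoeff_mderiv => m_supp _.
have mU_supp : (m + U_(i))%MM \in msupp p.
  by rewrite mcoeff_msupp; apply: contraNneq m_supp => ->; rewrite mul0rn.
by rewrite ltn_predRL; have := msize_mdeg_lt mU_supp; rewrite mdegD mdeg1 addn1.
Qed.

Lemma mderiv_eq0_mpolyC (R : idomainType) n (p : {mpoly R[n]}) : has_char0 R ->
  (forall i, mderiv i p = 0) -> p = (p@_0)%:MP.
Proof.
move=> /pcharf0P char0 dp0; apply/mpolyP => m; rewrite mcoeffC.
have [->|m_nz] := eqVneq m 0%MM; first by rewrite mulr1.
rewrite mulr0.
have [i mi_nz] : exists i, m i != 0%N.
  apply/existsP; apply: contraNT m_nz; rewrite negb_exists => /forallP m0.
  by apply/eqP/mnmP => i; rewrite mnm0E; apply/eqP; have := m0 i; rewrite negbK.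
have := congr1 (mcoeff (m - U_(i))%MM) (dp0 i).
rewrite mcoeff_mderiv mcoeff0 submK ?lep1mP // => /eqP.
by rewrite -mulr_natr mulf_eq0 char0 orbF => /eqP.
Qed.

Section LeftInverse.
Variables (R : idomainType) (n : nat) (ys ps : n.-tuple {mpoly R[n]}).
Hypothesis ps_ys : forall i, tnth ps i \mPo ys = 'X_i.

Lemma comp_mpoly_ps_ys p : p \mPo ps \mPo ys = p.
Proof.
rewrite comp_mpolyA -[RHS]comp_mpoly_id; congr comp_mpoly.
by apply: eq_from_tnth => i; rewrite !tnth_mktuple.
Qed.

Lemma jacobian_ps_ys : map_mx (comp_mpoly ys) (jacobian ps) *m jacobian ys = 1%:M.
Proof.
apply/matrixP => j i.
have := congr1 (fun v : 'rV_n => v 0 i) (mgrad_comp_mpoly ys (tnth ps j)).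
rewrite ps_ys !mxE mderivXU => ->.
by apply: eq_bigr => l _; rewrite !mxE.
Qed.

(* Since the Jacobian of ys is invertible, p \mPo ys = 0 forces every
   mderiv i p \mPo ys = 0; induct on msize, using that in characteristic zero
   a polynomial with zero partial derivatives is constant. *)
Lemma comp_mpoly_eq0 : has_char0 R -> forall p, p \mPo ys = 0 -> p = 0.
Proof.
move=> char0 p; move: {2}(msize p) (leqnn (msize p)) => N.
elim: N p => [|N IHN] p sz_p p0; first by apply/eqP; rewrite -msize_poly_eq0 -leqn0.
have grad_p0 : map_mx (comp_mpoly ys) (mgrad p) = 0.
  rewrite -[LHS]mulmx1 -(mulmx1C jacobian_ps_ys) mulmxA -mgrad_comp_mpoly p0.
  by rewrite mgrad0 mul0mx.
have dp0 i : mderiv i p = 0.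
  apply: IHN; first by rewrite (leq_trans (msize_mderiv i p)) // -subn1 leq_subLR add1n.
  by have := congr1 (fun v : 'rV_n => v 0 i) grad_p0; rewrite !mxE.
by move: p0; rewrite (mderiv_eq0_mpolyC char0 dp0) comp_mpolyC.
Qed.

Lemma comp_mpoly_ys_ps : has_char0 R -> forall p, p \mPo ys \mPo ps = p.
Proof.
move=> char0 p; apply/eqP; rewrite -subr_eq0; apply/eqP/(comp_mpoly_eq0 char0).
by rewrite raddfB /= comp_mpoly_ps_ys subrr.
Qed.

End LeftInverse.

Lemma coordinate_comp_mpolyX (K : fieldType) n (y : {mpoly K[n]}) :
  has_char0 K -> coordinate y ->
  exists (ps : n.-tuple {mpoly K[n]}) (i0 : 'I_n), y \mPo ps = 'X_i0.
Proof.
move=> char0 [ys [[i0 <-] X_ys]].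
have [f Xf] := fin_all_exists X_ys.
pose ps := [tuple f i | i < n].
have ps_ys i : tnth ps i \mPo ys = 'X_i by rewrite tnth_mktuple Xf.
exists ps, i0.
have -> : tnth ys i0 = 'X_i0 \mPo ys by rewrite comp_mpolyXU -tnth_nth.
exact: comp_mpoly_ys_ps.
Qed.

Section Divisibility.
Variables (K : fieldType) (n : nat).

Definition subst_u (t : n.-tuple {mpoly K[n]}) : (n + n).-tuple {mpoly K[n]} :=
  [tuple match split k with inl i => 'X_i | inr i => tnth t i end | k < n + n].

Lemma in_x_subst_u t p : in_x p \mPo subst_u t = p.
Proof.
rewrite /in_x comp_mpolyA -[RHS]comp_mpoly_id; congr comp_mpoly.
apply: eq_from_tnth => i; rewrite !tnth_mktuple comp_mpolyXU -tnth_nth tnth_mktuple.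
by rewrite (unsplitK (inl _ _)).
Qed.

Lemma in_u_subst_u t p : in_u p \mPo subst_u t = p \mPo t.
Proof.
rewrite /in_u comp_mpolyA; congr comp_mpoly.
apply: eq_from_tnth => i; rewrite !tnth_mktuple comp_mpolyXU -tnth_nth tnth_mktuple.
by rewrite (unsplitK (inr _ _)).
Qed.

Lemma mdvd_sub_horner (L : {poly K}) y :
  let c := (map_poly (@mpolyC n K) L).[y] in mdvd (in_x y - in_u y) (in_x c - in_u c).
Proof. by rewrite /in_x /in_u !comp_mpoly_horner; apply: horner_sub_factor. Qed.

Lemma horner_of_mdvd_sub (ps : n.-tuple {mpoly K[n]}) (i0 : 'I_n) y c :
  y \mPo ps = 'X_i0 -> mdvd (in_x y - in_u y) (in_x c - in_u c) ->
  exists L : {poly K}, c = (map_poly (@mpolyC n K) L).[y].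
Proof.
move=> y_ps [q dvd_c].
pose e := [tuple if i == i0 then y else 0 | i < n].
pose t := [tuple tnth ps i \mPo e | i < n].
have t_y : y \mPo t = y.
  by rewrite -comp_mpolyA y_ps comp_mpolyXU -tnth_nth tnth_mktuple eqxx.
have [L eL] := comp_mpoly_one_var i0 y (c \mPo ps).
exists L; rewrite -eL comp_mpolyA -/t.
move: (congr1 (comp_mpoly (subst_u t)) dvd_c).
rewrite rmorphM !raddfB /= !in_x_subst_u !in_u_subst_u t_y subrr mulr0.
by move/eqP; rewrite subr_eq0 => /eqP.
Qed.

End Divisibility.

Theorem proposition4p2 (K : fieldType) (n : nat) (c y1 : {mpoly K[n]}) :
  [pchar K] =i pred0 ->
  ~ (exists a : K, c = mpolyC n (R:=K) a) ->
  ((exists l : {poly K}, c = (map_poly (@mpolyC n K) l).[y1]) /\ coordinate y1)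
  <->
  (mdvd (in_x y1 - in_u y1) (in_x c - in_u c) /\ coordinate y1).
Proof.
move=> char0 _; split=> [[[L ->] y1_coord]|[dvd_c y1_coord]]; split=> //.
  exact: mdvd_sub_horner.
have [ps [i0 y1_ps]] := coordinate_comp_mpolyX char0 y1_coord.
exact: horner_of_mdvd_sub y1_ps dvd_c.
Qed.
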